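(* Let $\mathbb P$ be a forcing by Silver trees, $S,T\in\mathbb P$, $f:2^\omega\to 2^\omega$ continuous, and $\sigma\in 2^{<\omega}$. Then: (i) there are $S',T'\in\mathbb P$ with $S'\subseteq S$, $T'\subseteq T$ and $[T']\cap(\sigma\cdot f[[S']])=\emptyset$; (ii) if $\tau\in 2^{<\omega}$, $T=\tau\cdot S$, and $f$ is regular on $S$ inside $\mathbb P$, then there are $S',T'\in\mathbb P$ with $S'\subseteq S$, $T'\subseteq T$, $T'=\tau\cdot S'$ and $[T']\cap(\sigma\cdot f[[S']])=\emptyset$.
   Context: $2^{<\omega}$ is the set of finite binary strings, $2^\omega$ the Cantor space. A set $T\subseteq 2^{<\omega}$ is a Silver tree if there are strings $u_0,u_1,\dots$ such that $T$ consists exactly of all strings $u_0{}^\frown i_0{}^\frown\cdots{}^\frown u_m{}^\frown i_m$ ($m<\omega$, $i_k\in\{0,1\}$) and all their initial segments; $[T]$ is the set of its infinite branches. For $u\in T$, $T\restriction u=\{t\in T:u\subseteq t\text{ or }t\subseteq u\}$. Actions: for $s\in 2^{<\omega}$ and $x\in 2^\omega$, $(s\cdot x)(k)=x(k)+s(k)\bmod 2$ for $k<|s|$ and $(s\cdot x)(k)=x(k)$ otherwise; $s\cdot X=\{s\cdot x:x\in X\}$; for strings $s\in 2^m$, $t\in 2^k$ with $m\le k$, $(s\cdot t)(j)=t(j)+s(j)\bmod 2$ for $j<m$ and $=t(j)$ for $m\le j<k$, and if $m>k$, $s\cdot t=(s\restriction k)\cdot t$; $s\cdot T=\{s\cdot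 t:t\in T\}$. A forcing by Silver trees is a set $\mathbb P$ of Silver trees closed under $T\mapsto T\restriction u$ ($u\in T$) and $T\mapsto\sigma\cdot T$. A continuous $f:2^\omega\to 2^\omega$ is regular on $T\in\mathbb P$ inside $\mathbb P$ if there is no $T'\in\mathbb P$ with $T'\subseteq T$ and no $\sigma\in 2^{<\omega}$ such that $f(x)=\sigma\cdot x$ for all $x\in[T']$. *)

From mathcomp Require Import all_boot.
Set Implicit Arguments. Unset Strict Implicit. Unset Printing Implicit Defensive.

Definition str := seq bool.
Definition cantor := nat -> bool.
Definition strset := str -> Prop.

Definition restr (x : cantor) (n : nat) : str := mkseq x n.

Definition cantor_continuous (f : cantor -> cantor) : Prop :=
  forall (x : cantor) (n : nat), exists m : nat, forall y : cantor,
    (forall k, k < m -> y k = x k) -> forall k, k < n -> f y k = f x k.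

(* u_0 ^ i_0 ^ u_1 ^ i_1 ^ ... ^ u_m ^ i_m, where i = [:: i_0; ...; i_m] *)
Fixpoint silver_node (u : nat -> str) (k : nat) (i : seq bool) : str :=
  match i with
  | [::] => [::]
  | b :: i' => u k ++ b :: silver_node u k.+1 i'
  end.

Definition silver_tree (T : strset) : Prop :=
  exists u : nat -> str, forall t : str,
    T t <-> exists i : seq bool, 0 < size i /\ prefix t (silver_node u 0 i).

Definition body (T : strset) (x : cantor) : Prop := forall n, T (restr x n).

Definition tree_restr (T : strset) (u : str) : strset :=
  fun t => T t /\ (prefix u t \/ prefix t u).

Definition act (s : str) (x : cantor) : cantor :=
  fun k => if k < size s then xorb (x k) (nth false s k) else x k.

(* s . t for strings (covers both cases |s| <= |t| and |s| > |t|) *)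
Definition act_str (s t : str) : str :=
  mkseq (fun j => if j < size s then xorb (nth false t j) (nth false s j)
                  else nth false t j) (size t).

Definition act_tree (s : str) (T : strset) : strset :=
  fun t' => exists t, T t /\ t' = act_str s t.

Definition subtree (S T : strset) : Prop := forall t, S t -> T t.

Definition silver_forcing (P : strset -> Prop) : Prop :=
  (forall T, P T -> silver_tree T) /\
  (forall T u, P T -> T u -> P (tree_restr T u)) /\
  (forall T s, P T -> P (act_tree s T)).

Definition regular_on (P : strset -> Prop) (f : cantor -> cantor) (T : strset) : Prop :=
  ~ exists T' : strset, exists s : str,
      P T' /\ subtree T' T /\ forall x, body T' x -> forall k, f x k = act s x k.

Definition disjoint_image (T : strset) (s : str) (f : cantor -> cantor) (S : strset) : Prop :=
  forall y, body S y -> ~ body T (act s (f y)).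

(** Both parts separate at a single coordinate [k].  By continuity, [f y k]
    is determined by a long enough initial segment of [y], so restricting
    [S] to that segment freezes [(sigma . f y) k] on [[S']].  For (i) we cut
    [T] at its first splitting level and keep the branch that disagrees with
    the frozen value.  For (ii), regularity of [f] on [S] rules out
    [f y = (sigma . tau) . y] on all of [[S]], giving [x] and [k] with
    [(sigma . f x) k <> (tau . x) k]; restricting [S] to a long initial
    segment of [x] freezes both sides, and [T' := tau . S'] keeps the
    required shape. *)
From Stdlib Require Import Classical.
From mathcomp Require Import all_boot.
Set Implicit Arguments. Unset Strict Implicit.

Lemma actE (s : str) (x : cantor) k : act s x k = xorb (x k) (nth false s k).
Proof. by rewrite /act; case: ltnP => // h; rewrite nth_default // Bool.xorb_false_r. Qed.

Lemma size_restr (x : cantor) n : size (restr x n) = n.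
Proof. exact: size_mkseq. Qed.

Lemma nth_restr (x : cantor) n k : k < n -> nth false (restr x n) k = x k.
Proof. exact: nth_mkseq. Qed.

Lemma nth_act_str (s t : str) k : k < size t ->
  nth false (act_str s t) k = xorb (nth false t k) (nth false s k).
Proof.
move=> lt_k_t; rewrite /act_str nth_mkseq //; case: ltnP => // le_s_k.
by rewrite (nth_default _ le_s_k) Bool.xorb_false_r.
Qed.

Lemma size_act_str (s t : str) : size (act_str s t) = size t.
Proof. exact: size_mkseq. Qed.

Lemma act_strK (s : str) : cancel (act_str s) (act_str s).
Proof.
move=> t; apply: (@eq_from_nth _ false); rewrite !size_act_str // => k lt_k_t.
rewrite !nth_act_str ?size_act_str //.
by case: (nth false t k); case: (nth false s k).
Qed.

Lemma act_str_restr (s : str) (x : cantor) n : act_str s (restr x n) = restr (act s x) n.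
Proof.
apply: (@eq_from_nth _ false); rewrite size_act_str !size_restr // => k lt_k_n.
by rewrite nth_act_str ?size_restr // !nth_restr // actE.
Qed.

Lemma prefix_nth (s t : str) k : prefix s t -> k < size s -> nth false s k = nth false t k.
Proof. by move=> /prefixP [r ->] lt_k_s; rewrite nth_cat lt_k_s. Qed.

Lemma body_tree_restr_nth (S : strset) (a : str) (y : cantor) k :
  body (tree_restr S a) y -> k < size a -> y k = nth false a k.
Proof.
move=> /(_ (size a)) [_ cmp] lt_k_a; rewrite -(nth_restr _ lt_k_a).
by case: cmp => pre; rewrite (prefix_nth pre) ?size_restr.
Qed.

Lemma body_tree_restr_restr (S : strset) (x y : cantor) n k :
  body (tree_restr S (restr x n)) y -> k < n -> y k = x k.
Proof.
by move=> By lt_k_n; rewrite (body_tree_restr_nth By) ?size_restr ?nth_restr.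
Qed.

Lemma body_act_tree (s : str) (T : strset) (z : cantor) :
  body (act_tree s T) z -> body T (act s z).
Proof.
move=> Bz n; have [t [Tt ezt]] := Bz n.
by rewrite -act_str_restr ezt act_strK.
Qed.

Lemma subtree_tree_restr (T : strset) (a : str) : subtree (tree_restr T a) T.
Proof. by move=> t []. Qed.

Lemma subtree_act_tree (s : str) (S T : strset) :
  subtree S T -> subtree (act_tree s S) (act_tree s T).
Proof. by move=> sST t [t0 [St0 ->]]; exists t0; split; first exact: sST. Qed.

Lemma silver_tree_split (T : strset) :
  silver_tree T -> exists n, forall b, exists2 t, T t & nth false t n = b /\ n < size t.
Proof.
move=> [u Tu]; exists (size (u 0)) => b; exists (u 0 ++ [:: b]).
  by apply/Tu; exists [:: b]; split => //=; exact: prefix_refl.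
by rewrite nth_cat ltnn subnn size_cat addn1.
Qed.

Lemma disjoint_image_at (T : strset) (s : str) (f : cantor -> cantor) (S : strset) k :
  (forall y z, body S y -> body T z -> act s (f y) k <> z k) -> disjoint_image T s f S.
Proof. by move=> neq y By BT; exact: neq By BT _. Qed.

Definition str_xor (s t : str) : str :=
  mkseq (fun j => xorb (nth false s j) (nth false t j)) (maxn (size s) (size t)).

Lemma act_str_xor (s t : str) (x : cantor) k : act (str_xor s t) x k = act s (act t x) k.
Proof.
rewrite !actE /str_xor; case: (ltnP k (maxn (size s) (size t))) => [lt_k|].
  by rewrite nth_mkseq //; case: (x k); case: (nth false s k); case: (nth false t k).
rewrite geq_max => /andP [le_s_k le_t_k].
rewrite !nth_default ?size_mkseq ?geq_max ?le_s_k //.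
by rewrite !Bool.xorb_false_r.
Qed.

Section Separation.

Variables (P : strset -> Prop) (f : cantor -> cantor) (sigma : str).
Hypotheses (silverP : silver_forcing P) (f_cont : cantor_continuous f).

Lemma continuous_tree_restr (x : cantor) k :
  exists m, forall (S : strset) n y, m <= n -> body (tree_restr S (restr x n)) y ->
    f y k = f x k.
Proof.
have [m fm] := f_cont x k.+1; exists m => S n y le_m_n By.
apply: fm k (ltnSn k) => j lt_j_m.
exact: body_tree_restr_restr By (leq_trans lt_j_m le_m_n).
Qed.

Lemma separate_image (S T : strset) : P S -> P T ->
  exists S' T' : strset, P S' /\ P T' /\ subtree S' S /\ subtree T' T /\
    disjoint_image T' sigma f S'.
Proof.
have [silver [restrP _]] := silverP.
move=> PS PT; have [[y Sy] | no_branch] := classic (exists y, body S y); last first.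
  by exists S, T; do 4 split=> //; move=> y Sy; case: no_branch; exists y.
have [n splitT] := silver_tree_split (silver T PT).
have [t Tt [tn lt_n_t]] := splitT (~~ act sigma (f y) n).
have [m fm] := continuous_tree_restr y n.
exists (tree_restr S (restr y m)), (tree_restr T t).
do 4 (split; first by [apply: restrP | apply: subtree_tree_restr]).
apply: (disjoint_image_at (k := n)) => y' z By' Bz.
rewrite (body_tree_restr_nth Bz lt_n_t) tn !actE (fm S m y') //.
by case: (f y n); case: (nth false sigma n).
Qed.

Lemma regular_on_witness (S : strset) (rho : str) : P S -> regular_on P f S ->
  exists x k, body S x /\ f x k <> act rho x k.
Proof.
move=> PS reg; apply: NNPP => no_witness; apply: reg.
exists S, rho; do 2 split=> //; move=> x Sx k.
by apply: NNPP => neq; apply: no_witness; exists x, k.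
Qed.

Lemma separate_image_act (S : strset) (tau : str) : P S -> regular_on P f S ->
  exists S' T' : strset, P S' /\ P T' /\ subtree S' S /\ subtree T' (act_tree tau S) /\
    T' = act_tree tau S' /\ disjoint_image T' sigma f S'.
Proof.
have [_ [restrP actP]] := silverP.
move=> PS reg; have [x [k [Sx neq]]] := regular_on_witness (str_xor sigma tau) PS reg.
have [m fm] := continuous_tree_restr x k.
set S' := tree_restr S (restr x (maxn m k.+1)).
have PS' : P S' := restrP _ _ PS (Sx _).
exists S', (act_tree tau S'); split=> //; split; first exact: actP.
split; first exact: subtree_tree_restr.
split; first exact: subtree_act_tree (@subtree_tree_restr _ _).
split; first by [].
apply: (disjoint_image_at (k := k)) => y z By Bz.
have zk : z k = act tau x k.
  rewrite actE -(body_tree_restr_restr (body_act_tree Bz) (leq_maxr m k.+1)) actE.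
  by case: (z k); case: (nth false tau k).
rewrite zk !actE (fm S (maxn m k.+1) y) ?leq_maxl // => eq_k.
apply: neq; rewrite act_str_xor !actE -eq_k.
by case: (f x k); case: (nth false sigma k).
Qed.

End Separation.

Theorem lemma7p2 (P : strset -> Prop) (S T : strset) (f : cantor -> cantor) (sigma : str) :
  silver_forcing P -> P S -> P T -> cantor_continuous f ->
  (exists S' T' : strset, P S' /\ P T' /\ subtree S' S /\ subtree T' T /\
      disjoint_image T' sigma f S')
  /\
  (forall tau : str, T = act_tree tau S -> regular_on P f S ->
    exists S' T' : strset, P S' /\ P T' /\ subtree S' S /\ subtree T' T /\
      T' = act_tree tau S' /\ disjoint_image T' sigma f S').
Proof.
move=> silverP PS PT f_cont; split; first exact: separate_image.
by move=> tau ->; apply: separate_image_act.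
Qed.
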